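(* Let $\mathcal{E}$ be a quantum channel on $\mathbb{C}^d$, $M \ge 2$ and $N \ge 2$ integers. Let $\hat V_1,\dots,\hat V_M$ be i.i.d. from a unitary $4$-design on $\mathbb{C}^d$, $|\psi_i\rangle = \hat V_i|0\rangle$, $f_i := f_{\mathcal{E}}(\psi_i)$, and, conditional on $\psi_i$, let $X_{i,1},\dots,X_{i,N}\in\{0,1\}$ be i.i.d. Bernoulli($f_i$), with the data for different $i$ independent. Let $\hat F = \frac{1}{MN}\sum_{i=1}^M\sum_{s=1}^N X_{i,s}$. Then $$\mathrm{Var}(\hat F) = \frac{D^2}{M} + \frac{1}{MN}\left(F - \int d\psi\, f_{\mathcal{E}}(\psi)^2\right),$$ and in particular $\mathrm{Var}(\hat F) \le \frac{D^2}{M} + \frac{1}{4MN}$.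
   Context: $f_{\mathcal{E}}(\psi) := \langle\psi|\mathcal{E}(|\psi\rangle\langle\psi|)|\psi\rangle$. With $d\psi$ the Haar-induced probability measure on unit vectors of $\mathbb{C}^d$, $F := \int d\psi\, f_{\mathcal{E}}(\psi)$ and $D^2 := \int d\psi\, f_{\mathcal{E}}(\psi)^2 - F^2$. $|0\rangle$ is a fixed unit vector. A unitary $t$-design is a probability distribution on $U(d)$ such that for all $k\le t$ and all operators $\hat O$ on $(\mathbb{C}^d)^{\otimes k}$, $\mathbb{E}[\hat V^{\otimes k}\hat O\hat V^{\dagger\otimes k}] = \int \hat U^{\otimes k}\hat O\hat U^{\dagger\otimes k}\,d\hat U$ with $d\hat U$ the Haar measure. *)

From HB Require Import structures.
From mathcomp Require Import all_boot all_order all_algebra.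
From mathcomp Require Import all_classical all_reals all_analysis.
From mathcomp.real_closed Require Import complex mxtens.
Set Implicit Arguments. Unset Strict Implicit. Unset Printing Implicit Defensive.
Import Order.TTheory GRing.Theory Num.Theory.
Import numFieldTopology.Exports numFieldNormedType.Exports.
Local Open Scope ring_scope.

Section Defs.
Variable R : realType.
Local Notation C := (R[i]).

Definition adjmx m n (A : 'M[C]_(m, n)) : 'M[C]_(n, m) := (map_mx Num.Def.conjC A)^T.

Fixpoint tdim (d k : nat) : nat := if k is k'.+1 then (d * tdim d k')%N else 1%N.

Fixpoint tpow d (A : 'M[C]_d) (k : nat) {struct k} : 'M[C]_(tdim d k) :=
  match k as k0 return 'M[C]_(tdim d k0) with
  | 0 => 1%:M
  | k'.+1 => A *t tpow A k'
  end.

Definition psdmx n (A : 'M[C]_n) : Prop :=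
  adjmx A = A /\ forall v : 'cV[C]_n, 0 <= (adjmx v *m A *m v) 0 0.

(* ampliation (id_n (x) E) acting on operators on C^n (x) C^d *)
Definition ampl n d (E : 'M[C]_d -> 'M[C]_d) (X : 'M[C]_(n * d)) : 'M[C]_(n * d) :=
  \sum_(i < n) \sum_(j < n)
     (delta_mx i j : 'M[C]_n) *t
       E (\matrix_(a, b) X (mxtens_index (i, a)) (mxtens_index (j, b))).

Definition quantum_channel d (E : 'M[C]_d -> 'M[C]_d) : Prop :=
  [/\ (forall (a : C) X Y, E (a *: X + Y) = a *: E X + E Y),
      (forall X, \tr (E X) = \tr X) &
      (forall n (X : 'M[C]_(n * d)), psdmx X -> psdmx (ampl E X))].

(* f_E(psi) = <psi| E(|psi><psi|) |psi>  (a real number for a channel; we take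
   its real part) *)
Definition fE d (E : 'M[C]_d -> 'M[C]_d) (psi : 'cV[C]_d) : R :=
  complex.Re ((adjmx psi *m E (psi *m adjmx psi) *m psi) 0 0).

Definition mx_measurable {dT} (T : measurableType dT) m n (V : T -> 'M[C]_(m, n)) : Prop :=
  forall i j, measurable_fun setT (fun w => complex.Re (V w i j)) /\
              measurable_fun setT (fun w => complex.Im (V w i j)).

Definition Ex {dT} (T : measurableType dT) (P : probability T R) (g : T -> R) : R :=
  Rintegral P setT g.

Definition mxEx {dT} (T : measurableType dT) (P : probability T R) m n
  (G : T -> 'M[C]_(m, n)) : 'M[C]_(m, n) :=
  \matrix_(i, j) Complex (Ex P (fun w => complex.Re (G w i j)))
                         (Ex P (fun w => complex.Im (G w i j))).

Definition cont_test d (h : 'M[C]_d -> R) : Prop :=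
  exists g : 'M[R]_d * 'M[R]_d -> R, continuous g /\
    forall A, h A = g (map_mx (@complex.Re R) A, map_mx (@complex.Im R) A).

Definition is_haar {dT} (T : measurableType dT) (P : probability T R) d
  (U : T -> 'M[C]_d) : Prop :=
  [/\ (forall w, U w \is unitarymx), mx_measurable U &
      forall W : 'M[C]_d, W \is unitarymx -> forall h, cont_test h ->
        Ex P (fun w => h (W *m U w)) = Ex P (fun w => h (U w))].

Definition unitary_design (t : nat) {dH} (TH : measurableType dH) (PH : probability TH R)
  d (UH : TH -> 'M[C]_d) {dT} (T : measurableType dT) (P : probability T R)
  (V : T -> 'M[C]_d) : Prop :=
  [/\ (forall w, V w \is unitarymx), mx_measurable V &
      forall k, (k <= t)%N -> forall O : 'M[C]_(tdim d k),
        mxEx P (fun w => tpow (V w) k *m O *m tpow (adjmx (V w)) k)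
        = mxEx PH (fun w => tpow (UH w) k *m O *m tpow (adjmx (UH w)) k)].

Definition bern (p : R) (b : bool) : R := if b then p else 1 - p.

(* Joint law of the data (V_1..V_M, X_{i,s}) on (Om, P): the V_i are i.i.d. with
   the law of W (on (T', P')), and conditionally on psi_i = V_i v0 the
   X_{i,1..N} are i.i.d. Bernoulli(f_E(psi_i)), independently across i.
   Expressed by the product formula against all test functions
   prod_i h_i(V_i) * 1{X = x}. *)
Definition sampling_scheme {dO} (Om : measurableType dO) (P : probability Om R)
  (M N d : nat) (E : 'M[C]_d -> 'M[C]_d) (v0 : 'cV[C]_d)
  (V : 'I_M -> Om -> 'M[C]_d) (X : 'I_M -> 'I_N -> Om -> bool)
  {d'} (T' : measurableType d') (P' : probability T' R) (W : T' -> 'M[C]_d) : Prop :=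
  [/\ (forall i w, V i w \is unitarymx),
      (forall i, mx_measurable (V i)),
      (forall i s, measurable (X i s @^-1` [set true])) &
      forall h : 'I_M -> 'M[C]_d -> R, (forall i, cont_test (h i)) ->
      forall x : 'I_M -> 'I_N -> bool,
        Ex P (fun w => (\prod_(i < M) h i (V i w)) *
                       ([forall i, forall s, X i s w == x i s])%:R)
        = \prod_(i < M) Ex P' (fun u => h i (W u) *
                               \prod_(s < N) bern (fE E (W u *m v0)) (x i s))].

Definition Fhat {dO} (Om : measurableType dO) (M N : nat)
  (X : 'I_M -> 'I_N -> Om -> bool) (w : Om) : R :=
  ((M * N)%:R)^-1 * \sum_(i < M) \sum_(s < N) (X i s w)%:R.

Definition Var {dT} (T : measurableType dT) (P : probability T R) (g : T -> R) : R :=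
  Ex P (fun w => (g w - Ex P g) ^+ 2).

End Defs.

(** Conditionally on the states, the rows [X_i] are i.i.d. with the law of
    a Bernoulli vector whose success probability [f = f_E(psi)] is itself
    random, so [Var Fhat = Var (sum_s X_1s) / (M N^2)], and a sum of [N]
    conditionally i.i.d. Bernoulli(f) variables has variance
    [N E (f - f^2) + N^2 Var f].  The moments [E f] and [E f^2] are the same
    under a 4-design as under the Haar measure because, with [rho = psi psi^†],
    [f_E(psi)^n = Re tr (G rho^(x)2n)] for a fixed matrix [G]: [f_E(psi)] is the
    real part of [tr (E(rho) rho)], whose conjugate [tr (E(rho^†)^† rho)] is
    again quadratic in [rho].  The bound follows from [f - f^2 <= 1/4]. *)

From HB Require Import structures.
From mathcomp Require Import all_boot all_order all_algebra.
From mathcomp Require Import all_classical all_reals all_analysis.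
From mathcomp.real_closed Require Import complex mxtens.
From mathcomp Require Import measurable_realfun lra ring.
Set Implicit Arguments. Unset Strict Implicit. Unset Printing Implicit Defensive.
Import Order.TTheory GRing.Theory Num.Theory.
Import numFieldTopology.Exports.
Local Open Scope ring_scope.

(* [Num.Theory] exports a generic [Re]; here [Re] is the projection of [R[i]]. *)
Local Notation Re := complex.Re.
Local Notation Im := complex.Im.

Section BoundedExpectation.
Variables (R : realType) (dT : measure_display) (T : measurableType dT).
Variable P : probability T R.

Definition bounded_rv (g : T -> R) :=
  measurable_fun setT g /\ exists c : R, forall w, `|g w| <= c.

Lemma bounded_rv_cst c : bounded_rv (fun _ => c).
Proof. by split; [exact: measurable_cst | exists `|c|]. Qed.

Lemma bounded_rvD f g :
  bounded_rv f -> bounded_rv g -> bounded_rv (fun w => f w + g w).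
Proof.
move=> [mf [a ha]] [mg [b hb]]; split; first exact: measurable_funD.
by exists (a + b) => w; apply: le_trans (ler_normD _ _) (lerD _ _).
Qed.

Lemma bounded_rvN f : bounded_rv f -> bounded_rv (fun w => - f w).
Proof.
move=> [mf [a ha]]; split; first exact: measurable_funN.
by exists a => w; rewrite normrN.
Qed.

Lemma bounded_rvM f g :
  bounded_rv f -> bounded_rv g -> bounded_rv (fun w => f w * g w).
Proof.
move=> [mf [a ha]] [mg [b hb]]; split; first exact: measurable_funM.
by exists (a * b) => w; rewrite normrM ler_pM.
Qed.

Lemma bounded_rv_sum (I : Type) (s : seq I) (F : I -> T -> R) :
  (forall i, bounded_rv (F i)) -> bounded_rv (fun w => \sum_(i <- s) F i w).
Proof.
move=> hF; elim: s => [|i s ih].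
  by under eq_fun do rewrite big_nil; exact: bounded_rv_cst.
by under eq_fun do rewrite big_cons; exact: bounded_rvD.
Qed.

Lemma bounded_rv_prod (I : Type) (s : seq I) (F : I -> T -> R) :
  (forall i, bounded_rv (F i)) -> bounded_rv (fun w => \prod_(i <- s) F i w).
Proof.
move=> hF; elim: s => [|i s ih].
  by under eq_fun do rewrite big_nil; exact: bounded_rv_cst.
by under eq_fun do rewrite big_cons; exact: bounded_rvM.
Qed.

Lemma bounded_rv_integrable g : bounded_rv g -> P.-integrable setT (EFin \o g).
Proof.
move=> [mg [c hc]].
apply: (@le_integrable _ _ _ P setT _ _ (EFin \o cst c)) => //.
- exact/measurable_EFinP.
- by move=> w _ /=; rewrite lee_fin (le_trans (hc w) (ler_norm c)).
- exact: finite_measure_integrable_cst.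
Qed.

Lemma eq_Ex f g : (forall w, f w = g w) -> Ex P f = Ex P g.
Proof. by move=> e; congr (Ex P _); apply: funext. Qed.

Lemma Ex_cst c : Ex P (fun _ => c) = c.
Proof.
rewrite /Ex Rintegral_cst //.
transitivity (c * fine (1%E : \bar R)); last by rewrite mulr1.
by congr (c * fine _); exact: probability_setT.
Qed.

Lemma ExD f g :
  bounded_rv f -> bounded_rv g -> Ex P (fun w => f w + g w) = Ex P f + Ex P g.
Proof. by move=> hf hg; rewrite /Ex RintegralD //; exact: bounded_rv_integrable. Qed.

Lemma ExZl c g : bounded_rv g -> Ex P (fun w => c * g w) = c * Ex P g.
Proof. by move=> hg; rewrite /Ex RintegralZl //; exact: bounded_rv_integrable. Qed.

Lemma Ex_sum (I : Type) (s : seq I) (F : I -> T -> R) :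
  (forall i, bounded_rv (F i)) ->
  Ex P (fun w => \sum_(i <- s) F i w) = \sum_(i <- s) Ex P (F i).
Proof.
move=> hF; elim: s => [|i s ih].
  by under eq_fun do rewrite big_nil; rewrite big_nil Ex_cst.
under eq_fun do rewrite big_cons.
by rewrite big_cons ExD ?ih //; exact: bounded_rv_sum.
Qed.

Lemma ExB f g :
  bounded_rv f -> bounded_rv g -> Ex P (fun w => f w - g w) = Ex P f - Ex P g.
Proof.
move=> hf hg; rewrite ExD; [congr (_ + _) | done | exact: bounded_rvN].
by rewrite -mulN1r -ExZl //; apply: eq_Ex => w; rewrite mulN1r.
Qed.

Lemma le_Ex f g : bounded_rv f -> bounded_rv g ->
  (forall w, f w <= g w) -> Ex P f <= Ex P g.
Proof. by move=> hf hg hfg; apply: le_Rintegral => //; exact: bounded_rv_integrable. Qed.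

Lemma Ex_sub_Ex_sqr_le g : bounded_rv g -> Ex P g - Ex P (fun w => g w ^+ 2) <= 4^-1.
Proof.
move=> hg; have hsq : bounded_rv (fun w => g w ^+ 2) by exact: bounded_rvM.
rewrite -ExB // -[4^-1]Ex_cst; apply: le_Ex => [||w].
- exact: bounded_rvD (bounded_rvN _).
- exact: bounded_rv_cst.
- by have := sqr_ge0 (g w - 2^-1); nra.
Qed.

End BoundedExpectation.

Section ComplexParts.
Variable R : realType.
Implicit Types x y : R[i].

Lemma Re_add x y : Re (x + y) = Re x + Re y. Proof. by case: x; case: y. Qed.
Lemma Im_add x y : Im (x + y) = Im x + Im y. Proof. by case: x; case: y. Qed.
Lemma Re_mul x y : Re (x * y) = Re x * Re y - Im x * Im y.
Proof. by case: x; case: y. Qed.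
Lemma Im_mul x y : Im (x * y) = Re x * Im y + Im x * Re y.
Proof. by case: x; case: y. Qed.
Lemma Re_conj x : Re (Num.conj x) = Re x. Proof. by case: x. Qed.
Lemma Im_conj x : Im (Num.conj x) = - Im x. Proof. by case: x. Qed.

Lemma Re_sum (I : Type) (s : seq I) (F : I -> R[i]) :
  Re (\sum_(i <- s) F i) = \sum_(i <- s) Re (F i).
Proof. exact: (big_morph _ (@Re_add) (erefl : Re (0 : R[i]) = 0)). Qed.

Lemma Im_sum (I : Type) (s : seq I) (F : I -> R[i]) :
  Im (\sum_(i <- s) F i) = \sum_(i <- s) Im (F i).
Proof. exact: (big_morph _ (@Im_add) (erefl : Im (0 : R[i]) = 0)). Qed.

End ComplexParts.

Section BoundedMatrixRV.
Variables (R : realType) (dT : measure_display) (T : measurableType dT).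
Local Notation C := R[i].

Definition bounded_crv (z : T -> C) :=
  bounded_rv (fun w => Re (z w)) /\ bounded_rv (fun w => Im (z w)).

Definition bounded_mxrv m n (A : T -> 'M[C]_(m, n)) :=
  forall i j, bounded_crv (fun w => A w i j).

Lemma bounded_crv_cst c : bounded_crv (fun _ => c).
Proof. by split; exact: bounded_rv_cst. Qed.

Lemma bounded_crvM f g :
  bounded_crv f -> bounded_crv g -> bounded_crv (fun w => f w * g w).
Proof.
move=> [? ?] [? ?]; split.
  by under eq_fun do rewrite Re_mul; apply/bounded_rvD/bounded_rvN; exact: bounded_rvM.
by under eq_fun do rewrite Im_mul; apply: bounded_rvD; exact: bounded_rvM.
Qed.

Lemma bounded_crv_conj f : bounded_crv f -> bounded_crv (fun w => Num.conj (f w)).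
Proof.
move=> [? ?]; split; first by under eq_fun do rewrite Re_conj.
by under eq_fun do rewrite Im_conj; exact: bounded_rvN.
Qed.

Lemma bounded_crv_sum (I : Type) (s : seq I) (F : I -> T -> C) :
  (forall i, bounded_crv (F i)) -> bounded_crv (fun w => \sum_(i <- s) F i w).
Proof.
move=> hF; split.
  by under eq_fun do rewrite Re_sum; apply: bounded_rv_sum => i; case: (hF i).
by under eq_fun do rewrite Im_sum; apply: bounded_rv_sum => i; case: (hF i).
Qed.

Lemma bounded_mxrv_cst m n (B : 'M[C]_(m, n)) : bounded_mxrv (fun _ => B).
Proof. by move=> i j; exact: bounded_crv_cst. Qed.

Lemma bounded_mxrvM m n p (A : T -> 'M[C]_(m, n)) (B : T -> 'M[C]_(n, p)) :
  bounded_mxrv A -> bounded_mxrv B -> bounded_mxrv (fun w => A w *m B w).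
Proof.
move=> hA hB i j; under eq_fun do rewrite mxE.
by apply: bounded_crv_sum => k; exact: bounded_crvM.
Qed.

Lemma bounded_mxrv_tpow d (A : T -> 'M[C]_d) k :
  bounded_mxrv A -> bounded_mxrv (fun w => tpow (A w) k).
Proof.
move=> hA; elim: k => [|k ih] /=; first exact: bounded_mxrv_cst.
by move=> i j; under eq_fun do rewrite mxE; exact: bounded_crvM.
Qed.

Lemma bounded_mxrv_adj m n (A : T -> 'M[C]_(m, n)) :
  bounded_mxrv A -> bounded_mxrv (fun w => adjmx (A w)).
Proof. by move=> hA i j; under eq_fun do rewrite !mxE; exact: bounded_crv_conj. Qed.

Lemma bounded_crv_mxtrace n (A : T -> 'M[C]_n) :
  bounded_mxrv A -> bounded_crv (fun w => \tr (A w)).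
Proof. by move=> hA; apply: bounded_crv_sum. Qed.

Lemma unitarymx_entry_bound d (U : 'M[C]_d) i j : U \is unitarymx ->
  `|Re (U i j)| <= 1 /\ `|Im (U i j)| <= 1.
Proof.
move=> /unitarymxP hU.
have row_norm : \sum_k (Re (U i k) ^+ 2 + Im (U i k) ^+ 2) = 1.
  have := congr1 (fun A : 'M[C]_d => Re (A i i)) hU.
  rewrite /= !mxE eqxx /= Re_sum => <-; apply: eq_bigr => k _.
  by rewrite !mxE Re_mul Re_conj Im_conj !expr2 mulrN opprK.
have : Re (U i j) ^+ 2 + Im (U i j) ^+ 2 <= 1.
  rewrite -row_norm (bigD1 j) //= lerDl.
  by apply: sumr_ge0 => k _; apply: addr_ge0; exact: sqr_ge0.
by split; rewrite ler_norml; apply/andP; split; nra.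
Qed.

Lemma bounded_mxrv_unitary d (U : T -> 'M[C]_d) :
  (forall w, U w \is unitarymx) -> mx_measurable U -> bounded_mxrv U.
Proof.
move=> hU hM i j; have [mRe mIm] := hM i j.
by split; split => //; exists 1 => w; case: (unitarymx_entry_bound i j (hU w)).
Qed.

Variable P : probability T R.

Lemma Ex_Re_mul c (z : T -> C) : bounded_crv z ->
  Ex P (fun w => Re (c * z w))
  = Re (c * Complex (Ex P (fun w => Re (z w))) (Ex P (fun w => Im (z w)))).
Proof.
move=> [hRe hIm]; under eq_Ex do rewrite Re_mul.
by rewrite ExB ?ExZl ?Re_mul //; apply: bounded_rvM => //; exact: bounded_rv_cst.
Qed.

Lemma Ex_Re_mxtrace n (G : 'M[C]_n) (A : T -> 'M[C]_n) : bounded_mxrv A ->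
  Ex P (fun w => Re (\tr (G *m A w))) = Re (\tr (G *m mxEx P A)).
Proof.
move=> hA.
have hRe i j : bounded_rv (fun w => Re (G i j * A w j i)).
  by case: (bounded_crvM (bounded_crv_cst (G i j)) (hA j i)).
under eq_Ex do rewrite Re_sum; under eq_Ex do under eq_bigr do rewrite mxE Re_sum.
rewrite Re_sum Ex_sum => [|i]; last exact: bounded_rv_sum.
apply: eq_bigr => i _; rewrite mxE Re_sum Ex_sum //.
by apply: eq_bigr => j _; rewrite Ex_Re_mul // mxE.
Qed.

End BoundedMatrixRV.

Lemma prod_if_eq (R : comRingType) n (j : 'I_n) (a : 'I_n -> R) :
  \prod_(i < n) (if i == j then a i else 1) = a j.
Proof. by rewrite -big_mkcond big_pred1_eq. Qed.

Lemma natr_mul_pred (R : pzRingType) n : (n * n.-1)%:R = n%:R * (n%:R - 1) :> R.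
Proof. by case: n => [|n]; rewrite ?mul0r // natrM -natr1 addrK. Qed.

Lemma sum_weighted_sqr_dev (R : comRingType) (I : finType) (p f : I -> R) :
  \sum_i p i = 1 ->
  \sum_i p i * (f i - \sum_j p j * f j) ^+ 2
  = \sum_i p i * f i ^+ 2 - (\sum_j p j * f j) ^+ 2.
Proof.
set m := \sum_j p j * f j => p_sum1.
transitivity (\sum_i (p i * f i ^+ 2 - 2 * m * (p i * f i) + m ^+ 2 * p i)).
  by apply: eq_bigr => i _; ring.
by rewrite big_split sumrB /= -!mulr_sumr p_sum1 -/m; ring.
Qed.

Section ProductWeight.
Variables (R : comRingType) (T : finType) (w : T -> R).
Hypothesis w_sum1 : \sum_t w t = 1.

Definition pweight n (x : {ffun 'I_n -> T}) : R := \prod_(i < n) w (x i).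

Local Notation wmean G := (\sum_t w t * G t).

Lemma pweight_factor n (F : 'I_n -> T -> R) :
  \sum_x pweight x * \prod_(i < n) F i (x i) = \prod_(i < n) wmean (F i).
Proof.
under eq_bigr do rewrite -big_split.
by rewrite -(bigA_distr_bigA (fun i t => w t * F i t)).
Qed.

Lemma pweight_sum1 n : \sum_(x : {ffun 'I_n -> T}) pweight x = 1.
Proof.
transitivity (\sum_(x : {ffun 'I_n -> T}) pweight x * \prod_(i < n) (1 : R)).
  by apply: eq_bigr => x _; rewrite big1 ?mulr1.
rewrite (pweight_factor (fun _ _ => 1)) big1 // => i _.
by under eq_bigr do rewrite mulr1.
Qed.

Lemma wmean_if (b : bool) (G : T -> R) :
  wmean (fun t => if b then G t else 1) = if b then wmean G else 1.
Proof. by case: b => //; under eq_bigr do rewrite mulr1. Qed.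

Lemma pweight_marginal n (j : 'I_n) (G : T -> R) :
  \sum_x pweight x * G (x j) = wmean G.
Proof.
transitivity (\sum_(x : {ffun 'I_n -> T}) pweight x *
    \prod_(i < n) (if i == j then G (x i) else 1)).
  by apply: eq_bigr => x _; rewrite prod_if_eq.
rewrite (pweight_factor (fun i t => if i == j then G t else 1)).
by under eq_bigr do rewrite wmean_if; rewrite prod_if_eq.
Qed.

Lemma pweight_marginal2 n (j k : 'I_n) (G H : T -> R) : j != k ->
  \sum_x pweight x * (G (x j) * H (x k)) = wmean G * wmean H.
Proof.
move=> jk; pose F i t := (if i == j then G t else 1) * (if i == k then H t else 1).
transitivity (\sum_(x : {ffun 'I_n -> T}) pweight x * \prod_(i < n) F i (x i)).
  by apply: eq_bigr => x _; rewrite big_split /= !prod_if_eq.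
rewrite pweight_factor.
have wmeanF i :
    wmean (F i) = (if i == j then wmean G else 1) * (if i == k then wmean H else 1).
  have [->|ij] := eqVneq i j; rewrite /F.
    by rewrite eqxx (negbTE jk) mulr1; under eq_bigr do rewrite mulr1.
  by rewrite (negbTE ij) mul1r -wmean_if; under eq_bigr do rewrite mul1r.
by under eq_bigr do rewrite wmeanF; rewrite big_split /= !prod_if_eq.
Qed.

Lemma pweight_mean_sum n (g : T -> R) :
  \sum_x pweight x * \sum_(i < n) g (x i) = n%:R * wmean g.
Proof.
under eq_bigr do rewrite mulr_sumr.
rewrite exchange_big /=; under eq_bigr do rewrite pweight_marginal.
by rewrite sumr_const card_ord mulr_natl.
Qed.

Lemma pweight_sqr_sum n (g : T -> R) :
  \sum_x pweight x * (\sum_(i < n) g (x i)) ^+ 2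
  = n%:R * wmean (fun t => g t ^+ 2) + (n * n.-1)%:R * wmean g ^+ 2.
Proof.
under eq_bigr do rewrite expr2 mulr_suml mulr_sumr.
rewrite exchange_big /=.
transitivity (\sum_(j < n) (wmean (fun t => g t ^+ 2) + n.-1%:R * wmean g ^+ 2)).
  apply: eq_bigr => j _; under eq_bigr do rewrite !mulr_sumr.
  rewrite exchange_big (bigD1 j) //=; congr (_ + _).
    by rewrite -(pweight_marginal j); apply: eq_bigr => x _; rewrite expr2.
  transitivity (\sum_(k < n | k != j) wmean g ^+ 2).
    by apply: eq_bigr => k kj; rewrite pweight_marginal2 1?eq_sym // expr2.
  by rewrite sumr_const cardC1 card_ord mulr_natl.
rewrite big_split /= !sumr_const card_ord !mulr_natl -mulrnA.
by rewrite mulnC.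
Qed.

Lemma pweight_var_sum n (g : T -> R) :
  \sum_x pweight x * (\sum_(i < n) g (x i)) ^+ 2
    - (\sum_x pweight x * \sum_(i < n) g (x i)) ^+ 2
  = n%:R * (wmean (fun t => g t ^+ 2) - wmean g ^+ 2).
Proof. by rewrite pweight_sqr_sum pweight_mean_sum natr_mul_pred; ring. Qed.

End ProductWeight.

Section TensorForms.
Variables (R : realType) (d : nat).
Local Notation C := R[i].

Lemma mxtrace_delta_mul n (i j : 'I_n) (A : 'M[C]_n) : \tr (delta_mx i j *m A) = A j i.
Proof.
rewrite /mxtrace (bigD1 i) //= big1 => [|k ki]; last first.
  by rewrite mxE big1 // => l _; rewrite mxE (negbTE ki) mul0r.
rewrite mxE (bigD1 j) //= big1 => [|k kj]; first by rewrite mxE !eqxx mul1r !addr0.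
by rewrite mxE (negbTE kj) andbF mul0r.
Qed.

Lemma mxtrace_tens m n (A : 'M[C]_m) (B : 'M[C]_n) : \tr (A *t B) = \tr A * \tr B.
Proof. by rewrite /mxtrace mulr_sum; apply: eq_bigr => i _; rewrite mxE. Qed.

Definition tensor_form k (phi : 'M[C]_d -> C) :=
  exists G : 'M[C]_(tdim d k), forall rho, phi rho = \tr (G *m tpow rho k).

Lemma tensor_form0 k : tensor_form k (fun _ => 0).
Proof. by exists 0 => rho; rewrite mul0mx mxtrace0. Qed.

Lemma tensor_form_cst c : tensor_form 0 (fun _ => c).
Proof. by exists c%:M => rho; rewrite mulmx1 mxtrace_scalar. Qed.

Lemma tensor_formD k phi psi : tensor_form k phi -> tensor_form k psi ->
  tensor_form k (fun rho => phi rho + psi rho).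
Proof. by move=> [G hG] [H hH]; exists (G + H) => rho; rewrite hG hH mulmxDl mxtraceD. Qed.

Lemma tensor_formZ k c phi : tensor_form k phi -> tensor_form k (fun rho => c * phi rho).
Proof. by move=> [G hG]; exists (c *: G) => rho; rewrite hG -scalemxAl mxtraceZ. Qed.

Lemma tensor_form_sum k (I : Type) (s : seq I) (F : I -> 'M[C]_d -> C) :
  (forall i, tensor_form k (F i)) -> tensor_form k (fun rho => \sum_(i <- s) F i rho).
Proof.
move=> hF; elim: s => [|i s ih].
  by under eq_fun do rewrite big_nil; exact: tensor_form0.
by under eq_fun do rewrite big_cons; exact: tensor_formD.
Qed.

Lemma tensor_form_entry k r s : tensor_form k (fun rho => tpow rho k r s).
Proof. by exists (delta_mx s r) => rho; rewrite mxtrace_delta_mul. Qed.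

Lemma tensor_form_entryM k a b phi : tensor_form k phi ->
  tensor_form k.+1 (fun rho => rho a b * phi rho).
Proof.
move=> [G hG]; exists (delta_mx b a *t G) => rho /=.
by rewrite tensmx_mul mxtrace_tens mxtrace_delta_mul hG.
Qed.

Lemma tensor_formM k l phi psi : tensor_form k phi -> tensor_form l psi ->
  tensor_form (k + l) (fun rho => phi rho * psi rho).
Proof.
elim: k phi => [|k ih] phi [G hG] hpsi.
  have -> : phi = fun _ => G ord0 ord0.
    by apply: funext => rho; rewrite hG /= mulmx1 /mxtrace big_ord1.
  exact: tensor_formZ.
(* split each index of [C^d (x) C^(d^k)] into its first factor and the rest *)
pose F i j (rho : 'M[C]_d) := G i j * (rho (mxtens_unindex j).1 (mxtens_unindex i).1 *
  (tpow rho k (mxtens_unindex j).2 (mxtens_unindex i).2 * psi rho)).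
have -> : (fun rho => phi rho * psi rho) = fun rho => \sum_i \sum_j F i j rho.
  apply: funext => rho; rewrite hG mulr_suml; apply: eq_bigr => i _.
  by rewrite !mxE mulr_suml; apply: eq_bigr => j _; rewrite !mxE -!mulrA.
apply: tensor_form_sum => i; apply: tensor_form_sum => j; apply: tensor_formZ.
exact/tensor_form_entryM/ih/hpsi/tensor_form_entry.
Qed.

Lemma tensor_formX k n phi : tensor_form k phi ->
  tensor_form (k * n) (fun rho => phi rho ^+ n).
Proof.
move=> hphi; elim: n => [|n ih]; first by rewrite muln0; exact: tensor_form_cst.
by rewrite mulnS; under eq_fun do rewrite exprS; exact: tensor_formM.
Qed.

End TensorForms.

Section Adjoint.
Variable R : realType.
Local Notation C := R[i].

Lemma adjmxM m n p (A : 'M[C]_(m, n)) (B : 'M[C]_(n, p)) :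
  adjmx (A *m B) = adjmx B *m adjmx A.
Proof. by rewrite /adjmx map_mxM trmx_mul. Qed.

Lemma adjmxK m n (A : 'M[C]_(m, n)) : adjmx (adjmx A) = A.
Proof. by apply/matrixP => i j; rewrite !mxE conjCK. Qed.

Lemma adjmx_semilinear m n a (A B : 'M[C]_(m, n)) :
  adjmx (a *: A + B) = Num.conj a *: adjmx A + adjmx B.
Proof. by apply/matrixP => i j; rewrite !mxE rmorphD rmorphM. Qed.

Lemma mxtrace_adjmx n (A : 'M[C]_n) : \tr (adjmx A) = Num.conj (\tr A).
Proof. by rewrite rmorph_sum; apply: eq_bigr => i _; rewrite !mxE. Qed.

Lemma tpowM d (A B : 'M[C]_d) k : tpow (A *m B) k = tpow A k *m tpow B k.
Proof. by elim: k => [|k ih] /=; rewrite ?mul1mx // tensmx_mul ih. Qed.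

End Adjoint.

Section LinearQuadratic.
Variables (R : realType) (d : nat) (L : 'M[R[i]]_d -> 'M[R[i]]_d).
Hypothesis L_linear : forall a X Y, L (a *: X + Y) = a *: L X + L Y.

Lemma lin0 : L 0 = 0.
Proof.
have := L_linear 1 0 0; rewrite scaler0 addr0 scale1r => h.
by apply: (addrI (L 0)); rewrite addr0 -h.
Qed.

Lemma linD X Y : L (X + Y) = L X + L Y.
Proof. by rewrite -[X]scale1r L_linear !scale1r. Qed.

Lemma linZ a X : L (a *: X) = a *: L X.
Proof. by rewrite -[a *: X]addr0 L_linear lin0 addr0. Qed.

Lemma lin_entry rho a b : L rho a b = \sum_c \sum_e rho c e * L (delta_mx c e) a b.
Proof.
rewrite {1}(matrix_sum_delta rho) (big_morph L linD lin0) summxE; apply: eq_bigr => c _.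
rewrite (big_morph L linD lin0) summxE; apply: eq_bigr => e _.
by rewrite linZ mxE.
Qed.

Lemma tensor_form_tr_lin : tensor_form 2 (fun rho => \tr (L rho *m rho)).
Proof.
have -> : (fun rho => \tr (L rho *m rho)) = fun rho => \sum_a \sum_b \sum_c \sum_e
    L (delta_mx c e) a b * (rho c e * (rho b a * 1)).
  apply: funext => rho; apply: eq_bigr => a _; rewrite mxE; apply: eq_bigr => b _.
  rewrite lin_entry mulr_suml; apply: eq_bigr => c _.
  by rewrite mulr_suml; apply: eq_bigr => e _; rewrite mulr1 mulrCA mulrA.
do 4! apply: tensor_form_sum => ?.
exact/tensor_formZ/tensor_form_entryM/tensor_form_entryM/tensor_form_cst.
Qed.

End LinearQuadratic.

Section FidelityForm.
Variables (R : realType) (d : nat) (E : 'M[R[i]]_d -> 'M[R[i]]_d).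
Hypothesis E_linear : forall a X Y, E (a *: X + Y) = a *: E X + E Y.
Local Notation C := R[i].

Lemma fE_mxtrace (psi : 'cV[C]_d) :
  fE E psi = Re (\tr (E (psi *m adjmx psi) *m (psi *m adjmx psi))).
Proof.
rewrite /fE; congr Re.
have -> : forall A : 'M[C]_1, A 0 0 = \tr A by move=> A; rewrite /mxtrace big_ord1.
by rewrite [LHS]mxtrace_mulC !mulmxA [LHS]mxtrace_mulC mulmxA.
Qed.

Lemma mxtrace_conj_hermitian rho : adjmx rho = rho ->
  Num.conj (\tr (E rho *m rho)) = \tr (adjmx (E (adjmx rho)) *m rho).
Proof.
by move=> hrho; rewrite -mxtrace_adjmx adjmxM [LHS]mxtrace_mulC hrho.
Qed.

(* [fE E psi] is the real part of [tr (E rho *m rho)] and, [rho] being hermitian,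
   the conjugate of that trace is [tr (adjmx (E (adjmx rho)) *m rho)]. *)
Definition fE_lin (X : 'M[C]_d) := E X + adjmx (E (adjmx X)).

Lemma fE_lin_linear (a : C) (X Y : 'M[C]_d) :
  fE_lin (a *: X + Y) = a *: fE_lin X + fE_lin Y.
Proof.
rewrite /fE_lin !(E_linear, adjmx_semilinear) conjCK.
by rewrite scalerDr -!addrA; congr (_ + _); rewrite addrCA.
Qed.

Lemma fE_exp_tensor_form n : exists2 phi, tensor_form (2 * n) phi &
  forall psi : 'cV[C]_d, fE E psi ^+ n = Re (phi (psi *m adjmx psi)).
Proof.
exists (fun rho => (2^-1 * \tr (fE_lin rho *m rho)) ^+ n).
  exact/tensor_formX/tensor_formZ/tensor_form_tr_lin/fE_lin_linear.
move=> psi; set rho := psi *m adjmx psi.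
have herm : adjmx rho = rho by rewrite /rho adjmxM adjmxK.
have -> : 2^-1 * \tr (fE_lin rho *m rho) = ((fE E psi)%:C)%C.
  rewrite fE_mxtrace ReJ_add mulrC mulmxDl mxtraceD.
  by rewrite -[X in _ + X](mxtrace_conj_hermitian herm).
by rewrite -rmorphXn.
Qed.

End FidelityForm.

Section DesignMoments.
Variables (R : realType) (d : nat).
Local Notation C := R[i].

Lemma tpow_conjugation (A P0 : 'M[C]_d) k :
  tpow (A *m P0 *m adjmx A) k = tpow A k *m tpow P0 k *m tpow (adjmx A) k.
Proof. by rewrite !tpowM. Qed.

Lemma bounded_mxrv_tpow_conjugation dT (T : measurableType dT) (A : T -> 'M[C]_d) P0 k :
  bounded_mxrv A ->
  bounded_mxrv (fun u => tpow (A u) k *m tpow P0 k *m tpow (adjmx (A u)) k).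
Proof.
move=> hA; apply: bounded_mxrvM; first apply: bounded_mxrvM.
- exact: bounded_mxrv_tpow.
- exact: bounded_mxrv_cst.
- exact/bounded_mxrv_tpow/bounded_mxrv_adj.
Qed.

Lemma bounded_rv_tensor_form dT (T : measurableType dT) (A : T -> 'M[C]_d) P0 k phi :
  tensor_form k phi -> bounded_mxrv A ->
  bounded_rv (fun u => Re (phi (A u *m P0 *m adjmx (A u)))).
Proof.
move=> [G hG] hA; under eq_fun do rewrite hG tpow_conjugation.
apply: (bounded_crv_mxtrace (bounded_mxrvM (bounded_mxrv_cst _ _) _)).1.
exact: bounded_mxrv_tpow_conjugation.
Qed.

Variables (t : nat) (dH : measure_display) (TH : measurableType dH).
Variables (PH : probability TH R) (UH : TH -> 'M[C]_d).
Variables (dD : measure_display) (TD : measurableType dD).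
Variables (PD : probability TD R) (W : TD -> 'M[C]_d).
Hypothesis design : unitary_design t PH UH PD W.
Hypothesis UH_bounded : bounded_mxrv UH.

Lemma design_Ex_tensor_form k phi P0 : (k <= t)%N -> tensor_form k phi ->
  Ex PD (fun u => Re (phi (W u *m P0 *m adjmx (W u))))
  = Ex PH (fun u => Re (phi (UH u *m P0 *m adjmx (UH u)))).
Proof.
case: design => W_unitary W_meas W_moments kt [G hG].
have W_bounded := bounded_mxrv_unitary W_unitary W_meas.
under eq_Ex do rewrite hG tpow_conjugation.
under [RHS]eq_Ex do rewrite hG tpow_conjugation.
rewrite !Ex_Re_mxtrace ?(W_moments k kt) //; exact: bounded_mxrv_tpow_conjugation.
Qed.

Variables (E : 'M[C]_d -> 'M[C]_d) (v0 : 'cV[C]_d).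
Hypothesis E_linear : forall a X Y, E (a *: X + Y) = a *: E X + E Y.

Lemma pure_state_mul (A : 'M[C]_d) (psi : 'cV[C]_d) :
  A *m psi *m adjmx (A *m psi) = A *m (psi *m adjmx psi) *m adjmx A.
Proof. by rewrite adjmxM !mulmxA. Qed.

Lemma bounded_rv_fE dT (T : measurableType dT) (A : T -> 'M[C]_d) :
  bounded_mxrv A -> bounded_rv (fun u => fE E (A u *m v0)).
Proof.
move=> hA; have [phi hphi fE_phi] := fE_exp_tensor_form E_linear 1.
under eq_fun do rewrite -[fE _ _]expr1 fE_phi pure_state_mul.
exact: (bounded_rv_tensor_form _ hphi hA).
Qed.

Lemma design_Ex_fE_exp n : (2 * n <= t)%N ->
  Ex PD (fun u => fE E (W u *m v0) ^+ n) = Ex PH (fun u => fE E (UH u *m v0) ^+ n).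
Proof.
have [phi hphi fE_phi] := fE_exp_tensor_form E_linear n.
under eq_Ex do rewrite fE_phi pure_state_mul.
under [RHS]eq_Ex do rewrite fE_phi pure_state_mul.
by move=> ht; exact: (design_Ex_tensor_form _ ht hphi).
Qed.

End DesignMoments.

Section Outcomes.
Variables (R : realType) (dO : measure_display) (Om : measurableType dO).
Variables (P : probability Om R) (M N : nat) (X : 'I_M -> 'I_N -> Om -> bool).
Hypothesis X_measurable : forall i s, measurable (X i s @^-1` [set true]).

Local Notation outcomes := {ffun 'I_M -> {ffun 'I_N -> bool}}.

Definition outcome w : outcomes := [ffun i => [ffun s => X i s w]].

Definition successes n (y : {ffun 'I_n -> bool}) : R := \sum_(s < n) (y s : nat)%:R.

Lemma outcome_eqE (x : outcomes) w :
  [forall i, forall s, X i s w == x i s] = (outcome w == x).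
Proof.
apply/forallP/eqP => [h|<- i]; last by apply/forallP => s; rewrite !ffunE.
by apply/ffunP => i; apply/ffunP => s; rewrite !ffunE; exact/eqP/(forallP (h i)).
Qed.

Lemma bounded_rv_outcome_eq (x : outcomes) : bounded_rv (fun w => (outcome w == x)%:R : R).
Proof.
have -> : (fun w => (outcome w == x)%:R : R) =
    fun w => \prod_i \prod_s \1_(X i s @^-1` [set x i s]) w.
  apply: funext => w; rewrite -outcome_eqE.
  have [/forallP h|/forallPn [i /forallPn [s hs]]] :=
    boolP [forall i, forall s, X i s w == x i s].
    rewrite big1 // => i _; rewrite big1 // => s _.
    by rewrite indicE mem_set //=; apply/eqP; exact: (forallP (h i) s).
  rewrite (bigD1 i) // (bigD1 s) //= indicE memNset ?mul0r //.
  by move=> /= e; rewrite e eqxx in hs.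
apply: bounded_rv_prod => i; apply: bounded_rv_prod => s.
have mX : measurable (X i s @^-1` [set x i s]).
  case: (x i s); first exact: X_measurable.
  rewrite (_ : _ @^-1` _ = ~` (X i s @^-1` [set true]))%classic; first exact: measurableC.
  by apply/seteqP; split => w /=; case: (X i s w).
split; first exact: measurable_indic.
by exists 1 => w; rewrite indicE; case: (w \in _); rewrite ?normr1 ?normr0.
Qed.

Lemma Ex_outcome (G : outcomes -> R) :
  Ex P (fun w => G (outcome w)) = \sum_x G x * Ex P (fun w => (outcome w == x)%:R).
Proof.
transitivity (Ex P (fun w => \sum_x G x * (outcome w == x)%:R)).
  apply: eq_Ex => w; under eq_bigr do rewrite mulr_natr mulrb eq_sym.
  by rewrite -big_mkcond big_pred1_eq.
rewrite Ex_sum => [|x]; last exact/bounded_rvM/bounded_rv_outcome_eq/bounded_rv_cst.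
by apply: eq_bigr => x _; rewrite ExZl //; exact: bounded_rv_outcome_eq.
Qed.

Lemma Var_Fhat_iid (q : {ffun 'I_N -> bool} -> R) : \sum_y q y = 1 ->
  (forall x, Ex P (fun w => (outcome w == x)%:R) = pweight q x) ->
  Var P (Fhat R X) = ((M * N)%:R ^+ 2)^-1 * M%:R *
    (\sum_y q y * successes y ^+ 2 - (\sum_y q y * successes y) ^+ 2).
Proof.
move=> q_sum1 law; set k := ((M * N)%:R : R)^-1.
pose S (x : outcomes) := \sum_i successes (x i).
have -> : Fhat R X = fun w => k * S (outcome w).
  apply: funext => w; congr (_ * _); apply: eq_bigr => i _.
  by apply: eq_bigr => s _; rewrite !ffunE.
rewrite /Var (Ex_outcome (fun x => k * S x)).
rewrite (Ex_outcome (fun x => (k * S x - _) ^+ 2)).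
have pweight_law (F : outcomes -> R) :
    \sum_x F x * Ex P (fun w => (outcome w == x)%:R) = \sum_x pweight q x * F x.
  by apply: eq_bigr => x _; rewrite law mulrC.
rewrite !pweight_law sum_weighted_sqr_dev ?pweight_sum1 //.
under eq_bigr do rewrite exprMn mulrCA; under [in X in _ - X]eq_bigr do rewrite mulrCA.
by rewrite -!mulr_sumr exprMn -mulrBr /S pweight_var_sum // /k exprVn mulrA.
Qed.

End Outcomes.

Section Bernoulli.
Variables (R : realType) (p : R).

Lemma bern_sum1 : \sum_b bern p b = 1.
Proof. by rewrite big_bool /= addrC subrK. Qed.

Lemma bern_mean : \sum_b bern p b * (b : nat)%:R = p.
Proof. by rewrite big_bool /= mulr1 mulr0 addr0. Qed.

Lemma bern_mean_sqr : \sum_b bern p b * (b : nat)%:R ^+ 2 = p.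
Proof. by rewrite big_bool /= expr1n expr0n mulr1 mulr0 addr0. Qed.

End Bernoulli.

Section MixedBernoulli.
Variables (R : realType) (dD : measure_display) (TD : measurableType dD).
Variables (PD : probability TD R) (p : TD -> R) (N : nat).
Hypothesis p_bounded : bounded_rv p.

Definition mixed_bernoulli (y : {ffun 'I_N -> bool}) : R :=
  Ex PD (fun u => pweight (bern (p u)) y).

Lemma bounded_rv_pweight_bern (y : {ffun 'I_N -> bool}) :
  bounded_rv (fun u => pweight (bern (p u)) y).
Proof.
apply: bounded_rv_prod => s; rewrite /bern; case: (y s) => //.
exact: bounded_rvD (bounded_rv_cst _ _) (bounded_rvN p_bounded).
Qed.

Lemma mixed_bernoulli_Ex (G : {ffun 'I_N -> bool} -> R) :
  \sum_y mixed_bernoulli y * G y = Ex PD (fun u => \sum_y pweight (bern (p u)) y * G y).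
Proof.
rewrite Ex_sum => [|y]; last first.
  exact: bounded_rvM (bounded_rv_pweight_bern y) (bounded_rv_cst _ _).
apply: eq_bigr => y _; rewrite mulrC -ExZl; last exact: bounded_rv_pweight_bern.
by apply: eq_Ex => u; rewrite mulrC.
Qed.

Lemma mixed_bernoulli_sum1 : \sum_y mixed_bernoulli y = 1.
Proof.
under eq_bigr do rewrite -[mixed_bernoulli _]mulr1.
rewrite mixed_bernoulli_Ex -[RHS](Ex_cst PD); apply: eq_Ex => u.
by under eq_bigr do rewrite mulr1; rewrite pweight_sum1 ?bern_sum1.
Qed.

Lemma mixed_bernoulli_var :
  \sum_y mixed_bernoulli y * successes R y ^+ 2
    - (\sum_y mixed_bernoulli y * successes R y) ^+ 2
  = N%:R * (Ex PD p - Ex PD (fun u => p u ^+ 2))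
    + N%:R ^+ 2 * (Ex PD (fun u => p u ^+ 2) - Ex PD p ^+ 2).
Proof.
have p2_bounded : bounded_rv (fun u => p u ^+ 2) by exact: bounded_rvM.
pose g (b : bool) : R := b%:R.
rewrite !mixed_bernoulli_Ex /successes.
under eq_Ex do rewrite (pweight_sqr_sum (bern_sum1 _) N g) bern_mean bern_mean_sqr.
under [in X in _ - X]eq_Ex do rewrite (pweight_mean_sum (bern_sum1 _) N g) bern_mean.
rewrite ExD ?ExZl // ?natr_mul_pred; first ring.
  exact: bounded_rvM (bounded_rv_cst _ _) p_bounded.
exact: bounded_rvM (bounded_rv_cst _ _) p2_bounded.
Qed.

End MixedBernoulli.

Arguments mixed_bernoulli {R dD TD} PD p {N} y.

Lemma sampling_scheme_outcome_law (R : realType) (dO : measure_display)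
    (Om : measurableType dO) (P : probability Om R) (M N d : nat)
    (E : 'M[R[i]]_d -> 'M[R[i]]_d) v0 V (X : 'I_M -> 'I_N -> Om -> bool)
    (dD : measure_display) (TD : measurableType dD) (PD : probability TD R) W :
  sampling_scheme P E v0 V X PD W -> forall x,
  Ex P (fun w => (outcome X w == x)%:R)
  = pweight (mixed_bernoulli PD (fun u => fE E (W u *m v0))) x.
Proof.
move=> [_ _ _ law] x.
have cst1 : cont_test (fun _ : 'M[R[i]]_d => 1 : R).
  by exists (fun _ => 1); split; first exact: cst_continuous.
have := law _ (fun _ => cst1) (fun i s => x i s); rewrite big1 //.
under eq_Ex do rewrite mul1r outcome_eqE.
by move=> ->; apply: eq_bigr => i _; apply: eq_Ex => u; rewrite mul1r.
Qed.

Theorem proposition7 (R : realType) (d : nat) (E : 'M[R[i]]_d -> 'M[R[i]]_d)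
  (v0 : 'cV[R[i]]_d) (M N : nat)
  (dH : measure_display) (TH : measurableType dH) (PH : probability TH R)
  (UH : TH -> 'M[R[i]]_d)
  (dD : measure_display) (TD : measurableType dD) (PD : probability TD R)
  (W : TD -> 'M[R[i]]_d)
  (dO : measure_display) (Om : measurableType dO) (P : probability Om R)
  (V : 'I_M -> Om -> 'M[R[i]]_d) (X : 'I_M -> 'I_N -> Om -> bool) :
  quantum_channel E ->
  adjmx v0 *m v0 = 1%:M ->
  (2 <= M)%N -> (2 <= N)%N ->
  is_haar PH UH ->
  unitary_design 4 PH UH PD W ->
  sampling_scheme P E v0 V X PD W ->
  let F := Ex PH (fun u => fE E (UH u *m v0)) in
  let F2 := Ex PH (fun u => fE E (UH u *m v0) ^+ 2) in
  let D2 := F2 - F ^+ 2 in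
  Var P (Fhat R X) = D2 / M%:R + (F - F2) / (M * N)%:R /\
  Var P (Fhat R X) <= D2 / M%:R + (4 * M * N)%:R^-1.
Proof.
move=> [E_linear _ _] _ M2 N2 [UH_unitary UH_meas _] design samp F F2 D2.
have UH_bounded := bounded_mxrv_unitary UH_unitary UH_meas.
have [W_unitary W_meas _] := design.
pose p u := fE E (W u *m v0).
have p_bounded : bounded_rv p :=
  bounded_rv_fE v0 E_linear (bounded_mxrv_unitary W_unitary W_meas).
have Ep : Ex PD p = F := design_Ex_fE_exp design UH_bounded v0 E_linear (n := 1) isT.
have Ep2 : Ex PD (fun u => p u ^+ 2) = F2 :=
  design_Ex_fE_exp design UH_bounded v0 E_linear (n := 2) isT.
have [M0 N0] : M%:R != 0 :> R /\ N%:R != 0 :> R.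
  by rewrite !pnatr_eq0 -!lt0n (ltnW M2) (ltnW N2).
have VarE : Var P (Fhat R X) = D2 / M%:R + (F - F2) / (M * N)%:R.
  have [_ _ X_meas _] := samp.
  have law := sampling_scheme_outcome_law samp.
  rewrite (Var_Fhat_iid X_meas (mixed_bernoulli_sum1 PD N p_bounded) law).
  by rewrite (mixed_bernoulli_var PD N p_bounded) Ep Ep2 /D2 natrM; field; apply/andP.
split=> //; rewrite VarE lerD2l.
have -> : (4 * M * N)%:R^-1 = 4^-1 / (M * N)%:R :> R by rewrite !natrM; field; apply/andP.
by apply: ler_wpM2r; [rewrite invr_ge0 | rewrite -Ep -Ep2; exact: Ex_sub_Ex_sqr_le].
Qed.
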